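(* Let $0<k<n$ be integers with $n-2k+2\ge 0$. Then there exists a $k$-splitting of $Q_2^n$ that contains at most two $(n-k)$-faces of any fixed direction.
   Context: $Q_2^n=\{0,1\}^n$. For $0\le m\le n$, an $m$-face of $Q_2^n$ is given by a tuple $a=(a_1,\dots,a_n)\in\{0,1,*\}^n$ with exactly $m$ entries equal to $*$; it denotes the set $\{x\in Q_2^n : x_i=a_i \text{ whenever } a_i\in\{0,1\}\}$. The direction of a face is the set of positions of its asterisks. A $k$-splitting of $Q_2^n$ is a collection of exactly $2^k$ $(n-k)$-faces whose union is $Q_2^n$ (equivalently, a partition of $Q_2^n$ into $(n-k)$-faces). *)

From mathcomp Require Import all_boot.
Set Implicit Arguments.
Unset Strict Implicit.
Unset Printing Implicit Defensive.

Definition vertex (n : nat) := {ffun 'I_n -> bool}.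

(* A face is a word in {0,1,*}^n; [None] encodes the asterisk *,
   [Some b] encodes the fixed coordinate b. *)
Definition face (n : nat) := {ffun 'I_n -> option bool}.

Definition direction n (a : face n) : {set 'I_n} := [set i | a i == None].

Definition face_dim n (a : face n) : nat := #|direction a|.

Definition face_set n (a : face n) : {set vertex n} :=
  [set x : vertex n | [forall i, if a i is Some b then x i == b else true]].

Definition k_splitting n (k : nat) (S : {set face n}) : Prop :=
  [/\ #|S| = 2 ^ k,
      (forall a, a \in S -> face_dim a = n - k) &
      \bigcup_(a in S) face_set a = [set: vertex n]].

(* A splitting is described by a rule assigning to every point the fixed
   coordinates of the face through it together with a colour in bool, such that
   faces with the same direction get different colours; at most two faces then
   share a direction.  Such rules can be glued along a partition of a few new
   coordinates into faces, provided regions with the same direction carry rules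
   that colour equal directions differently ("separated" rules).  Branching on
   one new coordinate at a time yields two separated rules fixing j of 2j
   coordinates, and from them splittings of Q_2^n into (n-k)-faces whenever
   2k <= n+1.  In the extremal case 2k = n+2 one glues instead along the
   partition of Q_2^3 into three edges of pairwise distinct directions and two
   antipodal vertices, which is not a decision tree. *)

From mathcomp Require Import all_boot zify.
Set Implicit Arguments.
Unset Strict Implicit.
Unset Printing Implicit Defensive.

(* Points of Q_2^m are modelled as [nat -> bool], ignoring coordinates >= m;
   the face through [b] fixes the coordinates [fixed r b] to their values in [b]. *)
Record rule := Rule {
  fixed : (nat -> bool) -> seq nat;
  colour : (nat -> bool) -> bool }.

Definition coloured_splitting (m k : nat) (r : rule) : Prop := [/\
  forall b, [&& all (fun i => i < m) (fixed r b), uniq (fixed r b)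
              & size (fixed r b) == k],
  forall b b', {in fixed r b, b' =1 b} -> fixed r b' =i fixed r b &
  forall b b', fixed r b =i fixed r b' -> colour r b = colour r b' ->
    {in fixed r b, b' =1 b}].

Definition separated (r r' : rule) : Prop :=
  forall b b', fixed r b =i fixed r' b' -> colour r b != colour r' b'.

Lemma separated_sym r r' : separated r r' -> separated r' r.
Proof. by move=> sep b b' eq_bb'; rewrite eq_sym; apply: sep => i; rewrite eq_bb'. Qed.

Lemma coloured_splitting_widen m m' k r :
  m <= m' -> coloured_splitting m k r -> coloured_splitting m' k r.
Proof.
move=> le_mm' [small det sep]; split=> // b.
case/and3P: (small b) => /allP lt_m uniq_b size_b; apply/and3P; split=> //.
by apply/allP => i /lt_m /leq_trans; apply.
Qed.

Lemma card_face_set n (a : face n) : #|face_set a| = 2 ^ #|direction a|.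
Proof.
pose P i : pred bool := if a i is Some c then pred1 c else predT.
have -> : face_set a = [set x | x \in family P].
  apply/setP => x; rewrite !inE; apply/forallP/familyP => H i; have := H i;
  by rewrite /P; case: (a i).
rewrite cardsE card_family foldrE big_map big_enum /=.
rewrite -prod_nat_const [RHS]big_mkcond /=.
apply: eq_bigr => i _; rewrite /P inE.
by case: (a i) => [c|] /=; rewrite ?card1 ?card_bool.
Qed.

Lemma card_ord_mem n (s : seq nat) :
  all (fun i => i < n) s -> uniq s -> #|[set i : 'I_n | val i \in s]| = size s.
Proof.
elim: s => [|x s IHs] /=.
  by move=> _ _; apply/eqP; rewrite cards_eq0; apply/eqP/setP => i; rewrite !inE.
move=> /andP [lt_xn lt_s] /andP [x_notin_s uniq_s].
have -> : [set i : 'I_n | val i \in x :: s] = Ordinal lt_xn |: [set i | val i \in s].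
  by apply/setP => i; rewrite !inE -val_eqE.
by rewrite cardsU1 inE /= x_notin_s IHs.
Qed.

Definition bits n (v : vertex n) (i : nat) : bool :=
  if insub i is Some o then v o else false.

Lemma bitsE n (v : vertex n) (i : 'I_n) : bits v i = v i.
Proof. by rewrite /bits valK. Qed.

Section RuleFaces.
Variables (n m k : nat) (r : rule).
Hypotheses (split_r : coloured_splitting m k r) (le_mn : m <= n).

Definition face_of (v : vertex n) : face n :=
  [ffun i => if val i \in fixed r (bits v) then Some (v i) else None].

Definition rule_faces : {set face n} := [set face_of v | v : vertex n].

Lemma fixed_lt (v : vertex n) i : i \in fixed r (bits v) -> i < n.
Proof.
case: split_r => /(_ (bits v)) /and3P [/allP lt_m _ _] _ _ /lt_m.
by move/leq_trans; apply.
Qed.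

Lemma mem_face_of (v : vertex n) : v \in face_set (face_of v).
Proof. by rewrite inE; apply/forallP => i; rewrite ffunE; case: ifP. Qed.

Lemma face_of_eq (v w : vertex n) :
  w \in face_set (face_of v) -> face_of w = face_of v.
Proof.
rewrite inE => /forallP w_in.
have agree : {in fixed r (bits v), bits w =1 bits v}.
  move=> i i_fixed; have lt_in := fixed_lt i_fixed; have := w_in (Ordinal lt_in).
  by rewrite ffunE /= i_fixed -[i]/(val (Ordinal lt_in)) !bitsE => /eqP.
case: split_r => _ /(_ _ _ agree) eq_fixed _.
apply/ffunP => i; rewrite !ffunE eq_fixed; case: ifP => // i_fixed.
by have := w_in i; rewrite ffunE i_fixed => /eqP ->.
Qed.

Lemma direction_face_of (v : vertex n) :
  direction (face_of v) = ~: [set i : 'I_n | val i \in fixed r (bits v)].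
Proof. by apply/setP => i; rewrite !inE ffunE; case: ifP. Qed.

Lemma card_fixed (v : vertex n) : #|[set i : 'I_n | val i \in fixed r (bits v)]| = k.
Proof.
case: split_r => /(_ (bits v)) /and3P [_ uniq_fixed /eqP <-] _ _.
by apply: card_ord_mem => //; apply/allP => i /fixed_lt.
Qed.

Lemma face_dim_of (v : vertex n) : face_dim (face_of v) = n - k.
Proof.
rewrite /face_dim direction_face_of -(card_fixed v).
by rewrite cardsCs setCK card_ord.
Qed.

Lemma card_rule_faces : #|rule_faces| = 2 ^ k.
Proof.
have card_cube : #|[set: vertex n]| = #|rule_faces| * 2 ^ (n - k).
  rewrite -sum1_card (partition_big face_of (mem rule_faces)) => [|v _];
    last exact: imset_f.
  rewrite -sum_nat_const; apply: eq_bigr => _ /imsetP [v _ ->].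
  rewrite sum1_card -(face_dim_of v) -card_face_set; apply: eq_card => w.
  rewrite [LHS]unfold_in /= in_setT; apply/eqP/idP => [<- | /face_of_eq //].
  exact: mem_face_of.
have le_kn : k <= n.
  rewrite -(card_fixed [ffun=> false]).
  by apply: leq_trans (max_card _) _; rewrite card_ord.
move: card_cube; rewrite cardsT card_ffun card_bool card_ord -{1}(subnKC le_kn) expnD.
by move/eqP; rewrite eqn_pmul2r ?expn_gt0 // => /eqP.
Qed.

Lemma fixed_eq_of_direction (v w : vertex n) :
  direction (face_of v) = direction (face_of w) ->
  fixed r (bits v) =i fixed r (bits w).
Proof.
rewrite !direction_face_of => /setC_inj eq_fixed i.
case: (ltnP i n) => [lt_in | le_ni].
  by move/setP/(_ (Ordinal lt_in)): eq_fixed; rewrite !inE.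
by apply/idP/idP => /fixed_lt; rewrite ltnNge le_ni.
Qed.

Lemma face_of_eq_colour (v w : vertex n) :
  direction (face_of v) = direction (face_of w) ->
  colour r (bits v) = colour r (bits w) -> face_of w = face_of v.
Proof.
move=> /fixed_eq_of_direction eq_fixed eq_colour.
case: split_r => _ _ /(_ _ _ eq_fixed eq_colour) agree.
apply/ffunP => i; rewrite !ffunE -eq_fixed; case: ifP => // i_fixed.
by have := agree _ i_fixed; rewrite !bitsE => ->.
Qed.

Lemma rule_faces_direction D : #|[set a in rule_faces | direction a == D]| <= 2.
Proof.
pose rep c := [pick v | (direction (face_of v) == D) && (colour r (bits v) == c)].
pose face_of_colour c := face_of (odflt [ffun=> false] (rep c)).
apply: (@leq_trans #|face_of_colour @: [set: bool]|).
  apply/subset_leq_card/subsetP => _ /setIdP [/imsetP [v _ ->] /eqP dir_v].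
  apply/imsetP; exists (colour r (bits v)) => //; rewrite /face_of_colour /rep.
  case: pickP => [w /andP [/eqP dir_w /eqP col_w] | /(_ v)];
    last by rewrite dir_v !eqxx.
  by apply: face_of_eq_colour; rewrite ?dir_v ?dir_w.
by rewrite (leq_trans (leq_imset_card _ _)) // cardsT card_bool.
Qed.

Lemma rule_faces_splitting : k_splitting k rule_faces.
Proof.
split; [exact: card_rule_faces | by move=> _ /imsetP [v _ ->]; exact: face_dim_of |].
apply/setP => v; rewrite inE; apply/bigcupP.
by exists (face_of v); [exact: imset_f | exact: mem_face_of].
Qed.

End RuleFaces.

Lemma mem_cat_sep m (p l : seq nat) i :
  all (fun j => m <= j) p -> all (fun j => j < m) l ->
  ((i \in p) = (m <= i) && (i \in p ++ l)) *
  ((i \in l) = (i < m) && (i \in p ++ l)).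
Proof.
move=> /allP hp /allP hl; rewrite mem_cat.
by case: (boolP (i \in p)) => [/hp|] ip; case: (boolP (i \in l)) => [/hl|] il;
  rewrite /= ?andbT ?andbF ?orbF ?orbT; split; lia.
Qed.

Lemma eq_mem_cat_sep m (p p' l l' : seq nat) :
  all (fun i => m <= i) p -> all (fun i => m <= i) p' ->
  all (fun i => i < m) l -> all (fun i => i < m) l' ->
  p ++ l =i p' ++ l' -> p =i p' /\ l =i l'.
Proof.
move=> hp hp' hl hl' eq_cat; split=> i.
  by rewrite (mem_cat_sep i hp hl) (mem_cat_sep i hp' hl') eq_cat.
by rewrite (mem_cat_sep i hp hl) (mem_cat_sep i hp' hl') eq_cat.
Qed.

(* [region b] names the face of the cube on the coordinates [m, M) that
   contains [b]; its fixed coordinates are [pattern (region b)], and below [m]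
   the region is split by the rule [piece (region b)]. *)
Section Glue.
Variables (I : eqType) (m M K : nat) (region : (nat -> bool) -> I).
Variables (pattern : I -> seq nat) (k : I -> nat) (piece : I -> rule).
Hypotheses (le_mM : m <= M) (pattern_uniq : forall i, uniq (pattern i)).
Hypothesis pattern_high : forall i, all (fun x => m <= x < M) (pattern i).
Hypothesis size_pattern : forall i, size (pattern i) + k i = K.
Hypothesis region_face : forall b b',
  (region b' == region b) = all (fun x => b' x == b x) (pattern (region b)).
Hypothesis piece_splitting : forall i, coloured_splitting m (k i) (piece i).
Hypothesis piece_separated : forall i i',
  i != i' -> pattern i =i pattern i' -> separated (piece i) (piece i').

Definition glue : rule :=
  Rule (fun b => pattern (region b) ++ fixed (piece (region b)) b)
       (fun b => colour (piece (region b)) b).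

Let pattern_ge i : all (fun x => m <= x) (pattern i).
Proof. by apply: sub_all (pattern_high i) => x /andP []. Qed.

Let piece_lt i b : all (fun x => x < m) (fixed (piece i) b).
Proof. by case: (piece_splitting i) => /(_ b) /and3P []. Qed.

Lemma glue_splitting : coloured_splitting M K glue.
Proof.
split=> [b | b b' agree | b b' eq_fixed eq_colour] /=.
- case: (piece_splitting (region b)) => /(_ b) /and3P [_ uniq_b /eqP size_b] _ _.
  rewrite all_cat cat_uniq size_cat size_b size_pattern uniq_b pattern_uniq eqxx.
  rewrite !andbT -andbA; apply/and3P; split.
  + by apply: sub_all (pattern_high _) => x /andP [].
  + by apply: sub_all (piece_lt _ _) => x /leq_trans; apply.
  + apply/hasPn => x /(allP (piece_lt _ _)) lt_xm; apply/negP.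
    by move=> /(allP (pattern_ge _)); rewrite leqNgt lt_xm.
- have -> : region b' = region b.
    apply/eqP; rewrite region_face; apply/allP => x x_pat.
    by apply/eqP/agree; rewrite mem_cat x_pat.
  case: (piece_splitting (region b)) => _ det _ x.
  rewrite !mem_cat (det b) // => y y_fixed.
  by apply: agree; rewrite mem_cat y_fixed orbT.
- move: eq_colour => /= eq_colour.
  have [eq_pat eq_piece] := eq_mem_cat_sep (pattern_ge _) (pattern_ge _)
    (piece_lt _ _) (piece_lt _ _) eq_fixed.
  have [eq_region | neq_region] := eqVneq (region b') (region b).
  + move=> x; rewrite mem_cat => /orP [x_pat | x_fixed].
      have := region_face b b'; rewrite eq_region eqxx.
      by move=> /esym/allP/(_ x x_pat)/eqP.
    case: (piece_splitting (region b)) => _ _ sep; apply: sep x_fixed => //.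
      by move=> y; rewrite eq_piece eq_region.
    by rewrite eq_colour eq_region.
  + rewrite eq_sym in neq_region.
    by have /negP [] := piece_separated neq_region eq_pat eq_piece; rewrite eq_colour.
Qed.

End Glue.

Definition node (x : nat) (A B : rule) : rule :=
  glue (fun b => b x) (fun=> [:: x]) (fun s : bool => if s then B else A).

Lemma node_splitting x k A B :
  coloured_splitting x k A -> coloured_splitting x k B -> separated A B ->
  coloured_splitting x.+1 k.+1 (node x A B).
Proof.
move=> splitA splitB sepAB; apply: (glue_splitting (m := x) (k := fun=> k)) => //.
- by move=> _ /=; rewrite leqnn ltnSn.
- by move=> b b'; rewrite /= andbT.
- by case.
- by case; case=> // _ _; apply: separated_sym.
Qed.

(* On the coordinates z = m, x = m+1, y = m+2: the edge x = y = 0 ([None]),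
   and for each value s of z the edge {z = s, x_s = 1} ([Some (s, true)]) and
   the vertex {z = s, x_s = 0, x_(~s) = 1} ([Some (s, false)]), where
   x_true = x and x_false = y.  Only the two vertices share a direction. *)
Definition pinwheel_region (m : nat) (b : nat -> bool) : option (bool * bool) :=
  if ~~ b m.+1 && ~~ b m.+2 then None
  else Some (b m, if b m then b m.+1 else b m.+2).

Definition pinwheel_pattern (m : nat) (i : option (bool * bool)) : seq nat :=
  match i with
  | None => [:: m.+1; m.+2]
  | Some (s, true) => [:: m; if s then m.+1 else m.+2]
  | Some (_, false) => [:: m; m.+1; m.+2]
  end.

Definition pinwheel (m : nat) (R A B : rule) : rule :=
  glue (pinwheel_region m) (pinwheel_pattern m)
    (fun i => if i is Some (s, false) then (if s then B else A) else R).

Lemma pinwheel_splitting m k R A B :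
  coloured_splitting m k.+1 R -> coloured_splitting m k A ->
  coloured_splitting m k B -> separated A B ->
  coloured_splitting m.+3 k.+3 (pinwheel m R A B).
Proof.
move=> splitR splitA splitB sepAB.
apply: (glue_splitting (m := m)
  (k := fun i => if i is Some (_, false) then k else k.+1)) => //.
- by lia.
- by move=> [[[] []] |]; rewrite /= ?inE; lia.
- by move=> [[[] []] |] /=; lia.
- by move=> [[[] []] |].
- move=> b b'; rewrite /pinwheel_region.
  case bz: (b m); case bx: (b m.+1); case by_: (b m.+2); rewrite /= ?bz ?bx ?by_;
  by case: (b' m); case: (b' m.+1); case: (b' m.+2).
- by move=> [[[] []] |].
- move=> i i' neq_ii' eq_pat.
  move: neq_ii' (eq_pat m) (eq_pat m.+1) (eq_pat m.+2) => {eq_pat}.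
  case: i => [[[] []] |]; case: i' => [[[] []] |] //=; rewrite ?inE; try lia.
  by move=> *; apply: separated_sym.
Qed.

Lemma separated_by_coordinate x r r' :
  (forall b, x \in fixed r b) -> (forall b, x \notin fixed r' b) -> separated r r'.
Proof. by move=> in_r notin_r' b b' /(_ x); rewrite in_r (negPf (notin_r' b')). Qed.

Definition const_rule (c : bool) : rule := Rule (fun=> [::]) (fun=> c).

Fixpoint twin_rules (j : nat) : rule * rule :=
  if j is j'.+1 then
    let: (A, B) := twin_rules j' in (node (2 * j') A B, node (2 * j').+1 B A)
  else (const_rule false, const_rule true).

Lemma twin_rules_splitting j : let: (A, B) := twin_rules j in
  [/\ coloured_splitting (2 * j) j A, coloured_splitting (2 * j) j B
    & separated A B].
Proof.
elim: j => [|j] /=; first by split=> //; split.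
case: (twin_rules j) => A B [splitA splitB sepAB].
split.
- apply: coloured_splitting_widen (node_splitting splitA splitB sepAB); lia.
- have -> : 2 * j.+1 = (2 * j).+2 by lia.
  apply: node_splitting; last exact: separated_sym.
    exact: coloured_splitting_widen (leqnSn _) splitB.
  exact: coloured_splitting_widen (leqnSn _) splitA.
- (* the first rule always fixes 2j, the second never does *)
  apply: (@separated_by_coordinate (2 * j)) => b /=; first by rewrite inE eqxx.
  rewrite inE negb_or; apply/andP; split; first by lia.
  case: (b (2 * j).+1); [case: splitA | case: splitB];
  by move=> /(_ b) /and3P [/allP lt_2j _ _] _ _; apply/negP => /lt_2j; rewrite ltnn.
Qed.

Definition tree_rule (k : nat) : rule := let: (A, B) := twin_rules k in node (2 * k) A B.

Lemma tree_rule_splitting k : coloured_splitting (2 * k).+1 k.+1 (tree_rule k).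
Proof.
rewrite /tree_rule; have := twin_rules_splitting k.
by case: (twin_rules k) => A B [splitA splitB sepAB]; apply: node_splitting.
Qed.

Theorem proposition6 (n k : nat) :
  0 < k -> k < n -> 2 * k <= n + 2 ->
  exists S : {set face n},
    k_splitting k S /\
    forall D : {set 'I_n}, #|[set a in S | direction a == D]| <= 2.
Proof.
move=> k_gt0 lt_kn le_2k_n2.
suff [m [r [split_r le_mn]]] : exists m r, coloured_splitting m k r /\ m <= n.
  exists (rule_faces n r); split; first exact: rule_faces_splitting split_r le_mn.
  exact: rule_faces_direction split_r le_mn.
have [le_2k_n1 | lt_n1_2k] := leqP (2 * k) n.+1.
  have [k' def_k] : exists k', k = k'.+1 by exists k.-1; lia.
  subst k.
  by exists (2 * k').+1, (tree_rule k'); split; [apply: tree_rule_splitting | lia].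
have [j [def_k def_n]] : exists j, k = j.+3 /\ n = (2 * j).+4.
  by exists (k - 3); split; lia.
subst k n.
have := twin_rules_splitting j; case: (twin_rules j) => A B [splitA splitB sepAB].
exists (2 * j).+4, (pinwheel (2 * j).+1 (tree_rule j) A B); split=> //.
apply: pinwheel_splitting sepAB; first exact: tree_rule_splitting.
all: exact: coloured_splitting_widen (leqnSn _) _.
Qed.
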